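(* Let $q$ be odd and $c\in{\mathbb F}_q$. Then $$\prod\Big\{c-a: a\in{\mathbb F}_q,\ \left(\tfrac{a^2-4}{q}\right)=1\Big\}=\begin{cases}0&\text{if }\left(\frac{c^2-4}{q}\right)=1,\\ \left(\frac{c-2}{q}\right)&\text{if }\left(\frac{c^2-4}{q}\right)=-1,\\ -1/2& c=2,\\ \left(\frac{-1}{q}\right)/2 & c=-2,\end{cases}$$ $$\prod\Big\{c-b: b\in{\mathbb F}_q,\ \left(\tfrac{b^2-4}{q}\right)=-1\Big\}=\begin{cases}\left(\frac{c-2}{q}\right)&\text{if }\left(\frac{c^2-4}{q}\right)=1,\\ 0&\text{if }\left(\frac{c^2-4}{q}\right)=-1,\\ 1/2& c=2,\\ \left(\frac{-1}{q}\right)/2 & c=-2,\end{cases}$$ where an empty product equals $1$.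
   Context: $\left(\frac{a}{q}\right)$ denotes the Legendre symbol on ${\mathbb F}_q$: $1$ if $a$ is a nonzero square, $-1$ if a nonsquare, $0$ if $a=0$. *)

From HB Require Import structures.
From mathcomp Require Import all_boot all_order all_algebra all_fingroup all_field.
Set Implicit Arguments. Unset Strict Implicit. Unset Printing Implicit Defensive.
Import GRing.Theory.
Local Open Scope ring_scope.

Definition legendre (F : finFieldType) (a : F) : int :=
  if a == 0 then 0 else if [exists b : F, b ^+ 2 == a] then 1 else -1.

From HB Require Import structures.
From mathcomp Require Import all_boot all_algebra all_fingroup all_solvable all_field ring zify.
Set Implicit Arguments. Unset Strict Implicit. Unset Printing Implicit Defensive.
Import GRing.Theory.
Local Open Scope ring_scope.

(* Write m = (q - 1) / 2.  By Euler's criterion the Legendre symbol of x is x ^ m,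
   so whenever a ^ 2 - 4 = (a - 2) (a + 2) has symbol e = +-1 we get
   (a - 2) ^ m = e (a + 2) ^ m: such a are roots of G_e = (X - 2) ^ m - e (X + 2) ^ m.
   Since 2m = -1 in F, G_1 has degree m - 1 and G_(-1) degree m, both with leading
   coefficient 2.  The two root sets and {2, -2} partition F, which has 2m + 1
   elements, so the root counts are sharp and G_e = 2 \prod_(a : e) (X - a).
   Evaluating at c gives all eight cases. *)

Lemma natr_card_finNzRing (R : finNzRingType) : (#|R|%:R : R) = 0.
Proof. by have := expg_cardG (in_setT (1 : R)); rewrite cardsT FinRing.zmodXgE. Qed.

Lemma size_poly_coef_eq (R : nzSemiRingType) (p : {poly R}) n :
  (size p <= n.+1)%N -> p`_n != 0 -> size p = n.+1.
Proof.
move=> le_p_n nz_pn; apply/anti_leq; rewrite le_p_n ltnNge.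
by apply: contra nz_pn => /(nth_default 0) ->.
Qed.

Lemma coef_exp_XsubC_top (R : nzRingType) (b : R) n : (('X - b%:P) ^+ n)`_n = 1.
Proof. by have := monicP (monic_exp n (monicXsubC b)); rewrite /lead_coef size_exp_XsubC. Qed.

Lemma coef_exp_XsubC_high (R : nzRingType) (b : R) n j :
  (n < j)%N -> (('X - b%:P) ^+ n)`_j = 0.
Proof. by move=> lt_nj; rewrite nth_default // size_exp_XsubC. Qed.

Lemma coef_exp_XsubC_subtop (R : nzRingType) (b : R) n :
  (('X - b%:P) ^+ n.+1)`_n = - (n.+1%:R * b).
Proof.
elim: n => [|n IHn]; first by rewrite expr1 coefB coefX coefC /= mul1r sub0r.
rewrite exprSr mulrBr coefB coefMX /= IHn coefMC coef_exp_XsubC_top mul1r.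
by rewrite [in RHS]mulrSr mulrDl mul1r opprD.
Qed.

Lemma sqr_sub4 (R : comNzRingType) (a : R) : a ^+ 2 - 4 = (a - 2) * (a + 2).
Proof. ring. Qed.

Lemma polyXaddC2 (R : nzRingType) : 'X + 2%:P = 'X - (-2)%:P :> {poly R}.
Proof. by rewrite polyCN opprK. Qed.

Lemma legendre_eq0 (F : finFieldType) (x : F) : (legendre x == 0) = (x == 0).
Proof. by rewrite /legendre; case: (x == 0) => //; case: ifP. Qed.

Section RootsOverFiniteField.
Variables (F : finFieldType) (S : {pred F}) (p : {poly F}).
Hypothesis rootS : {in S, forall x, root p x}.

Lemma card_roots_lt_size : p != 0 -> (#|S| < size p)%N.
Proof.
move=> nz_p; rewrite cardE; apply: max_poly_roots nz_p _ (enum_uniq _).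
by apply/allP=> x; rewrite mem_enum => /rootS.
Qed.

Lemma horner_prod_roots c : size p = #|S|.+1 ->
  p.[c] = lead_coef p * \prod_(a in S) (c - a).
Proof.
rewrite cardE => /all_roots_prod_XsubC -> //; last by rewrite uniq_rootsE enum_uniq.
  rewrite lead_coefZ lead_coef_prod_XsubC mulr1 hornerZ horner_prod big_enum /=.
  by under eq_bigr do rewrite hornerXsubC.
by apply/allP=> x; rewrite mem_enum => /rootS.
Qed.

End RootsOverFiniteField.

Section OddFiniteField.
Variables (F : finFieldType).
Hypothesis oddF : odd #|F|.
Let m := #|F|./2.

Lemma card_odd_finField : #|F| = m.*2.+1.
Proof. by rewrite /m -{1}(odd_double_half #|F|) oddF. Qed.

Lemma half_card_gt0 : (0 < m)%N.
Proof. by have := finNzRing_gt1 F; rewrite card_odd_finField; case: m. Qed.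

Lemma natr_half_card : m%:R * 2 = -1 :> F.
Proof.
apply/eqP; rewrite -addr_eq0 -[m%:R * 2]natrM muln2 natr1 -card_odd_finField.
by rewrite natr_card_finNzRing.
Qed.

Lemma two_neq0 : 2 != 0 :> F.
Proof.
by apply: contra_eq_neq natr_half_card => ->; rewrite mulr0 eq_sym oppr_eq0 oner_eq0.
Qed.

Lemma expf_half_card_sqr (x : F) : x != 0 -> (x ^+ 2) ^+ m = 1.
Proof.
move=> nz_x; apply: (mulIf nz_x).
by rewrite -exprM mul1r -exprSr mul2n -card_odd_finField expf_card.
Qed.

Definition nonzero_square : {pred F} := [pred s | (s != 0) && [exists b, b ^+ 2 == s]].

Lemma half_card_le_nonzero_squares : (m <= #|nonzero_square|)%N.
Proof.
have fiber_le2 (s : F) : (#|[pred b : F | (b != 0%R) && (b ^+ 2 == s)]| <= 2)%N.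
  have nz_p : ('X^2 - s%:P : {poly F}) != 0 by rewrite -size_poly_eq0 size_XnsubC.
  rewrite -ltnS -[3%N](size_XnsubC s) //; apply: card_roots_lt_size nz_p.
  by move=> b /andP[_ /eqP <-]; rewrite rootE !hornerE subrr.
have := cardC1 (0 : F); rewrite card_odd_finField /= => card_nz.
rewrite -(leq_double m) -card_nz -sum1_card.
rewrite (partition_big (fun b => b ^+ 2) nonzero_square) /=; last first.
  by move=> b nz_b; apply/andP; split; [exact: expf_neq0 | apply/existsP; exists b].
rewrite -muln2 -sum_nat_const; apply: leq_sum => s _; rewrite sum1_card.
exact: fiber_le2.
Qed.

Lemma expf_half_nonzero_square (s : F) : nonzero_square s -> s ^+ m = 1.
Proof.
case/andP=> nz_s /existsP[b /eqP sq_b]; rewrite -sq_b expf_half_card_sqr //.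
by apply: contraNneq nz_s => b0; rewrite -sq_b b0 expr0n.
Qed.

Lemma legendre_expf (a : F) : (legendre a)%:~R = a ^+ m.
Proof.
rewrite /legendre; have [->|nz_a] := eqVneq a 0.
  by rewrite expr0n eqn0Ngt half_card_gt0.
case: ifP => [sq_a | nsq_a]; first by rewrite expf_half_nonzero_square //; apply/andP.
suff: a ^+ m != 1.
  have := expf_half_card_sqr nz_a; rewrite -exprM mulnC exprM.
  by move=> /eqP; rewrite sqrf_eq1 => /orP[->|/eqP->].
(* otherwise X^m - 1 would have the m nonzero squares and a as roots *)
apply/negP => /eqP am1.
have nz_p : ('X^m - 1%:P : {poly F}) != 0.
  by rewrite -size_poly_eq0 size_XnsubC ?half_card_gt0.
have roots_p : {in predU1 a nonzero_square, forall x, root ('X^m - 1%:P) x}.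
  move=> x /predU1P[->|/expf_half_nonzero_square sq_x]; rewrite rootE !hornerE.
    by rewrite am1 subrr.
  by rewrite sq_x subrr.
have card_aS : #|predU1 a nonzero_square| = #|nonzero_square|.+1.
  by rewrite cardU1 -topredE /= nsq_a andbF.
have := card_roots_lt_size roots_p nz_p.
rewrite size_XnsubC ?half_card_gt0 // card_aS ltnS.
by rewrite leqNgt ltnS half_card_le_nonzero_squares.
Qed.

Lemma expf_half_mul (x y : F) : y != 0 -> x ^+ m = (legendre (x * y))%:~R * y ^+ m.
Proof.
move=> nz_y; rewrite legendre_expf exprMn -mulrA -expr2 -exprM mulnC exprM.
by rewrite expf_half_card_sqr // mulr1.
Qed.

Definition discr_level (e : int) : {pred F} := [pred a | legendre (a ^+ 2 - 4) == e].

Lemma expf_half_discr_level (e : int) (a : F) : e != 0 -> a \in discr_level e ->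
  (a - 2) ^+ m = e%:~R * (a + 2) ^+ m.
Proof.
move=> nz_e /eqP lev_a; have nz_a2 : a + 2 != 0.
  by apply: contra_eq_neq lev_a => a2; rewrite sqr_sub4 a2 mulr0 /legendre eqxx eq_sym.
by rewrite (expf_half_mul _ nz_a2) -sqr_sub4 lev_a.
Qed.

Definition halfpow (e : int) : {poly F} :=
  ('X - 2%:P) ^+ m - e%:~R *: ('X + 2%:P) ^+ m.

Lemma horner_halfpow (e : int) (c : F) :
  (halfpow e).[c] = (c - 2) ^+ m - e%:~R * (c + 2) ^+ m.
Proof.
by rewrite /halfpow hornerD hornerN hornerZ !horner_exp hornerXsubC hornerD hornerX hornerC.
Qed.

Lemma root_halfpow (e : int) : e != 0 -> {in discr_level e, forall a, root (halfpow e) a}.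
Proof.
move=> nz_e a lev_a; rewrite rootE horner_halfpow.
by rewrite (expf_half_discr_level nz_e lev_a) subrr.
Qed.

Lemma coef_halfpow1 : (halfpow 1)`_m.-1 = 2.
Proof.
have mE : m = m.-1.+1 by rewrite prednK ?half_card_gt0.
rewrite /halfpow scale1r polyXaddC2 coefB [in X in X - _]mE [in X in _ - X]mE.
rewrite !coef_exp_XsubC_subtop -mE.
transitivity (- 2 * (m%:R * 2) : F); first ring.
by rewrite natr_half_card mulrNN mulr1.
Qed.

Lemma coef_halfpow (e : int) : (halfpow e)`_m = 1 - e%:~R.
Proof. by rewrite /halfpow polyXaddC2 coefB coefZ !coef_exp_XsubC_top mulr1. Qed.

Lemma coef_halfpow_high (e : int) j : (m < j)%N -> (halfpow e)`_j = 0.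
Proof.
by move=> lt_mj; rewrite /halfpow polyXaddC2 coefB coefZ !coef_exp_XsubC_high ?mulr0 ?subr0.
Qed.

Lemma size_halfpow1 : size (halfpow 1) = m.
Proof.
rewrite -[in RHS](prednK half_card_gt0); apply: size_poly_coef_eq.
  rewrite prednK ?half_card_gt0 //; apply/leq_sizeP => j.
  by rewrite leq_eqVlt => /predU1P[<-|/coef_halfpow_high//]; rewrite coef_halfpow subrr.
by rewrite coef_halfpow1 two_neq0.
Qed.

Lemma size_halfpowN1 : size (halfpow (-1)) = m.+1.
Proof.
apply: size_poly_coef_eq; first by apply/leq_sizeP => j /coef_halfpow_high.
by rewrite coef_halfpow opprK two_neq0.
Qed.

Lemma card_discr_levels : (#|discr_level 1| + #|discr_level (-1)| + 2 = #|F|)%N.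
Proof.
rewrite -(cardC (discr_level 1)) -addnA; congr (_ + _)%N.
rewrite -(cardID (discr_level (-1)) (predC (discr_level 1))); congr (_ + _)%N.
  apply: eq_card => a; rewrite !inE /discr_level /=.
  by case: (legendre (a ^+ 2 - 4) =P -1) => [-> //|_]; rewrite andbF.
have two_neqN2 : (2 : F) != -2.
  by rewrite -addr_eq0 (_ : 2 + 2 = 2 * 2) ?mulf_neq0 ?two_neq0 //; ring.
have -> : 2%N = #|pred2 (2 : F) (-2)| by rewrite card2 two_neqN2.
apply: eq_card => a.
have : (legendre (a ^+ 2 - 4) == 0) = (a \in pred2 2 (-2)).
  by rewrite legendre_eq0 sqr_sub4 mulf_eq0 subr_eq0 addr_eq0.
by rewrite !inE /discr_level /legendre /= => <-; case: (a ^+ 2 - 4 =P 0) => _ //; case: ifP.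
Qed.

Lemma size_halfpow_discr_level :
  size (halfpow 1) = #|discr_level 1|.+1 /\ size (halfpow (-1)) = #|discr_level (-1)|.+1.
Proof.
have nz_halfpow1 : halfpow 1 != 0 by rewrite -size_poly_gt0 size_halfpow1 half_card_gt0.
have nz_halfpowN1 : halfpow (-1) != 0 by rewrite -size_poly_gt0 size_halfpowN1.
have := card_roots_lt_size (root_halfpow (e := 1) isT) nz_halfpow1.
have := card_roots_lt_size (root_halfpow (e := -1) isT) nz_halfpowN1.
have := card_discr_levels; rewrite size_halfpow1 size_halfpowN1 card_odd_finField.
lia.
Qed.

Lemma prod_discr_level (e : int) (c : F) : (e == 1) || (e == -1) ->
  \prod_(a | legendre (a ^+ 2 - 4) == e) (c - a) =
  ((c - 2) ^+ m - e%:~R * (c + 2) ^+ m) / 2.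
Proof.
have [size1 sizeN1] := size_halfpow_discr_level.
have lead1 : lead_coef (halfpow 1) = 2 by rewrite /lead_coef size_halfpow1 coef_halfpow1.
have leadN1 : lead_coef (halfpow (-1)) = 2.
  by rewrite /lead_coef size_halfpowN1 coef_halfpow opprK.
rewrite -horner_halfpow; case/orP=> /eqP->.
  rewrite (horner_prod_roots (root_halfpow (e := 1) isT) c size1) lead1.
  by rewrite mulrC mulKf ?two_neq0.
rewrite (horner_prod_roots (root_halfpow (e := -1) isT) c sizeN1) leadN1.
by rewrite mulrC mulKf ?two_neq0.
Qed.

Lemma expf_half_four : (2 + 2 : F) ^+ m = 1.
Proof. by rewrite -[RHS](expf_half_card_sqr two_neq0); congr (_ ^+ _); ring. Qed.

End OddFiniteField.

Theorem proposition7p4 (F : finFieldType) (Hodd : odd #|F|) (c : F) :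
  ((legendre (c ^+ 2 - 4) = 1 ->
      \prod_(a : F | legendre (a ^+ 2 - 4) == 1) (c - a) = 0) /\
   (legendre (c ^+ 2 - 4) = -1 ->
      \prod_(a : F | legendre (a ^+ 2 - 4) == 1) (c - a) = (legendre (c - 2))%:~R) /\
   (c = 2 ->
      \prod_(a : F | legendre (a ^+ 2 - 4) == 1) (c - a) = - (1 / 2)) /\
   (c = -2 ->
      \prod_(a : F | legendre (a ^+ 2 - 4) == 1) (c - a) = (legendre (-1 : F))%:~R / 2))
  /\
  ((legendre (c ^+ 2 - 4) = 1 ->
      \prod_(b : F | legendre (b ^+ 2 - 4) == -1) (c - b) = (legendre (c - 2))%:~R) /\
   (legendre (c ^+ 2 - 4) = -1 ->
      \prod_(b : F | legendre (b ^+ 2 - 4) == -1) (c - b) = 0) /\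
   (c = 2 ->
      \prod_(b : F | legendre (b ^+ 2 - 4) == -1) (c - b) = 1 / 2) /\
   (c = -2 ->
      \prod_(b : F | legendre (b ^+ 2 - 4) == -1) (c - b) = (legendre (-1 : F))%:~R / 2)).
Proof.
have two_nz := two_neq0 Hodd.
have zero_pow : (0 : F) ^+ #|F|./2 = 0 by rewrite expr0n eqn0Ngt half_card_gt0.
have pow_m4 : (-2 - 2 : F) ^+ #|F|./2 = (legendre (-1 : F))%:~R.
  by rewrite legendre_expf // -[RHS]mulr1 -(expf_half_four Hodd) -exprMn; congr (_ ^+ _); ring.
have prod1 := prod_discr_level Hodd (e := 1) c isT.
have prodN1 := prod_discr_level Hodd (e := -1) c isT.
split; (split; [|split; [|split]]).
- by move=> lev_c; rewrite (bigD1 c) ?lev_c //= subrr mul0r.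
- move=> /eqP lev_c; rewrite prod1 legendre_expf //.
  by rewrite (expf_half_discr_level Hodd (e := -1) isT lev_c); field.
- by move=> c2; rewrite prod1 c2 subrr zero_pow (expf_half_four Hodd); field.
- by move=> cN2; rewrite prod1 cN2 pow_m4 (_ : -2 + 2 = 0) ?zero_pow; [field | ring].
- move=> /eqP lev_c; rewrite prodN1 legendre_expf //.
  by rewrite (expf_half_discr_level Hodd (e := 1) isT lev_c); field.
- by move=> lev_c; rewrite (bigD1 c) ?lev_c //= subrr mul0r.
- by move=> c2; rewrite prodN1 c2 subrr zero_pow (expf_half_four Hodd); field.
- by move=> cN2; rewrite prodN1 cN2 pow_m4 (_ : -2 + 2 = 0) ?zero_pow; [field | ring].
Qed.
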